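(* Consider a finite MDP, a target policy $\pi$ and a behaviour policy $\mu$, and assume that for each state $x\in\mathcal{X}$ there is a unique greedy action $a^*(x)=\arg\max_{b\in\mathcal{A}}Q^\pi(x,b)$. Then there exists $\alpha\in(0,1)$ such that, letting $\widetilde{Q}_\alpha$ be the fixed point of the $\alpha$-Retrace operator $\mathcal{R}^\alpha$, the greedy policy with respect to $\widetilde{Q}_\alpha$ coincides with the greedy policy with respect to $Q^\pi$ (i.e. $\arg\max_b \widetilde{Q}_\alpha(x,b)=\{a^*(x)\}$ for all $x$), and the contraction rate of $\mathcal{R}^\alpha$ is no greater than that of $\mathcal{R}^1$ (standard Retrace). Further, if $\pi$ and $\mu$ are $(x,a)$-distinguishable under $\mu$ for all $(x,a)\in\mathcal{X}\times\mathcal{A}$, then the contraction rate of $\mathcal{R}^\alpha$ is strictly lower than that of $\mathcal{R}^1$.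
   Context: MDP: finite state space $\mathcal{X}$, finite action space $\mathcal{A}$, discount $\gamma\in[0,1)$, transition kernel $P$, bounded rewards with mean $r(x,a)$; $Q^\nu$ denotes the action-value function of a policy $\nu$. $\mathbb{E}_\mu[\cdot\mid X_0=x,A_0=a]$ denotes expectation over the trajectory with $X_{t+1}\sim P(\cdot|X_t,A_t)$, $A_{t+1}\sim\mu(\cdot|X_{t+1})$; empty products equal $1$. For target $\pi'$ and behaviour $\mu$, the Retrace operator is $$(\mathcal{R}_{\pi',\mu}Q)(x,a)=Q(x,a)+\mathbb{E}_\mu\Big[\sum_{t\ge0}\gamma^t\Big(\prod_{s=1}^t\min\big(1,\tfrac{\pi'(A_s|X_s)}{\mu(A_s|X_s)}\big)\Big)\Big(r(X_t,A_t)+\gamma\sum_{b}\pi'(b|X_{t+1})Q(X_{t+1},b)-Q(X_t,A_t)\Big)\,\Big|\,X_0=x,A_0=a\Big].$$ The $\alpha$-Retrace operator is $\mathcal{R}^\alpha=\mathcal{R}_{\alpha\pi+(1-\alpha)\mu,\mu}$. The contraction rate of an operator $T$ is $\sup_{Q\neq Q'}\|TQ-TQ'\|_\infty/\|Q-Q'\|_\infty$. The greedy policy with respect to $Q$ selects at each $x$ an action in $\arg\max_b Q(x,b)$. Policies $\pi,\mu$ are $(x,a)$-distinguishable under $\mu$ if some state $x'$ visited with positive probability at some time $t\ge0$ by the $\mu$-trajectory started from $(x,a)$ satisfies $\pi(\cdot|x')\neq\mu(\cdot|x')$. *)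

From mathcomp Require Import all_boot all_order all_algebra.
From mathcomp Require Import all_classical all_reals all_analysis.
Set Implicit Arguments. Unset Strict Implicit. Unset Printing Implicit Defensive.
Import Order.TTheory GRing.Theory Num.Theory.
Import numFieldNormedType.Exports.
Local Open Scope ring_scope.
Local Open Scope classical_set_scope.

Definition rseries (R : realType) (u : nat -> R) : R := limn (series u).

Section MDP.
Variables (R : realType) (X A : finType).

(* A transition kernel P x a y = P(y | x, a). *)
Definition is_kernel (P : X -> A -> X -> R) : Prop :=
  (forall x a y, 0 <= P x a y) /\ (forall x a, \sum_(y : X) P x a y = 1).

(* A (stochastic) policy nu x b = nu(b | x). *)
Definition is_policy (nu : X -> A -> R) : Prop :=
  (forall x b, 0 <= nu x b) /\ (forall x, \sum_(b : A) nu x b = 1).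

(* One-step conditional expectation of f(X_1, A_1) given (X_0,A_0)=(x,a),
   when A_1 ~ nu(.|X_1), additionally weighted by w(X_1, A_1). *)
Definition step (P : X -> A -> X -> R) (nu w : X -> A -> R)
  (f : X -> A -> R) : X -> A -> R :=
  fun x a => \sum_(y : X) P x a y * \sum_(b : A) nu y b * (w y b * f y b).

(* Action-value function of nu:
   Q^nu(x,a) = E_nu[ sum_t gamma^t r(X_t,A_t) | X_0 = x, A_0 = a ],
   the t-th expectation being (step^t r)(x,a) (nested finite sums over the
   trajectory distribution). *)
Definition Qfun (P : X -> A -> X -> R) (r : X -> A -> R) (gamma : R)
  (nu : X -> A -> R) : X -> A -> R :=
  fun x a => rseries (fun t => gamma ^+ t *
     iter t (step P nu (fun _ _ => 1)) r x a).

Definition trace_c (pi' mu : X -> A -> R) : X -> A -> R :=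
  fun y b => Num.min 1 (pi' y b / mu y b).

Definition td (P : X -> A -> X -> R) (r : X -> A -> R) (gamma : R)
  (pi' : X -> A -> R) (Q : X -> A -> R) : X -> A -> R :=
  fun x a => r x a + gamma * \sum_(y : X) P x a y * \sum_(b : A) pi' y b * Q y b
             - Q x a.

(* Retrace operator R_{pi',mu}: the t-th term
   E_mu[ (prod_{s=1}^t c_s) delta_t | X_0 = x, A_0 = a ] is computed as nested
   finite sums over the trajectory, i.e. (step_mu,c ^t delta)(x,a). *)
Definition retrace (P : X -> A -> X -> R) (r : X -> A -> R) (gamma : R)
  (pi' mu : X -> A -> R) (Q : X -> A -> R) : X -> A -> R :=
  fun x a => Q x a + rseries (fun t => gamma ^+ t *
     iter t (step P mu (trace_c pi' mu)) (td P r gamma pi' Q) x a).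

Definition mixpol (alpha : R) (pi mu : X -> A -> R) : X -> A -> R :=
  fun x b => alpha * pi x b + (1 - alpha) * mu x b.

Definition alpha_retrace P r gamma (alpha : R) (pi mu : X -> A -> R) :=
  retrace P r gamma (mixpol alpha pi mu) mu.

Definition supnorm (Q : X -> A -> R) : R :=
  \big[Num.max/0]_(p : X * A) `|Q p.1 p.2|.

Definition contraction_rate (T : (X -> A -> R) -> (X -> A -> R)) : R :=
  sup [set k : R | exists Q Q' : X -> A -> R, Q <> Q' /\
         k = supnorm (fun x a => T Q x a - T Q' x a) /
             supnorm (fun x a => Q x a - Q' x a)].

Definition greedy (Q : X -> A -> R) (x : X) : set A :=
  [set b | forall b', Q x b' <= Q x b].

(* probability that the mu-trajectory started at (x,a) is at state x' at time t *)
Fixpoint visit_prob (P : X -> A -> X -> R) (mu : X -> A -> R) (t : nat)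
  (x : X) (a : A) (x' : X) : R :=
  match t with
  | 0 => if x == x' then 1 else 0
  | t'.+1 => \sum_(y : X) P x a y * \sum_(b : A) mu y b * visit_prob P mu t' y b x'
  end.

Definition distinguishable (P : X -> A -> X -> R) (pi mu : X -> A -> R)
  (x : X) (a : A) : Prop :=
  exists (t : nat) (x' : X), 0 < visit_prob P mu t x a x' /\
    exists b, pi x' b <> mu x' b.

End MDP.

(* Retrace with target p is affine with a positive linear part: with C the
   one-step operator weighted by the traces c = min(1, p / mu), and cut the one
   weighted by the untraced target mass p - mu c >= 0, every Q satisfies
   R Q = r + gamma cut Q + gamma C (R Q).  Hence |R Q - R Q'| <= |Q - Q'|_oo rho
   with rho = R 1 - R 0 the solution of rho = gamma (1 - C 1) + gamma C rho, and the
   contraction rate is exactly sup rho.  Moving the target from pi towards mu can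
   only enlarge the traces, which lowers rho by the maximum principle for gamma C;
   the decrease is strict at every (x, a) from which the behaviour trajectory
   reaches a state where pi and mu differ.  Finally a fixed point of alpha-Retrace
   is the action-value function of alpha pi + (1 - alpha) mu, which lies within
   O(1 - alpha) of Q^pi, so for alpha close to 1 it keeps the strict greedy actions
   of Q^pi. *)

From mathcomp Require Import all_boot all_order all_algebra.
From mathcomp Require Import all_classical all_reals all_analysis.
From mathcomp Require Import ring lra.
Import Order.TTheory GRing.Theory Num.Theory.
Import numFieldNormedType.Exports.
Local Open Scope ring_scope.
Local Open Scope classical_set_scope.
Set Implicit Arguments. Unset Strict Implicit.

Lemma psumr_gt0 (R : numDomainType) (I : finType) (F : I -> R) i :
  (forall j, 0 <= F j) -> 0 < F i -> 0 < \sum_j F j.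
Proof.
move=> F0 Fi; rewrite lt0r psumr_neq0 ?sumr_ge0 ?andbT //.
by apply/hasP; exists i; rewrite ?mem_index_enum.
Qed.

Lemma sumr_gt0_ex (R : realDomainType) (I : finType) (F : I -> R) :
  0 < \sum_j F j -> exists j, 0 < F j.
Proof.
apply: contraPP => /forallNP F0; apply/negP; rewrite -leNgt; apply: sumr_le0 => j _.
by rewrite leNgt; apply/negP/F0.
Qed.

Lemma sum_eq_exists_lt (R : realDomainType) (I : finType) (f g : I -> R) :
  \sum_i f i = \sum_i g i -> (exists i, f i <> g i) -> exists i, f i < g i.
Proof.
move=> sum_fg [i fgi]; have [//|/forallNP fg] := pselect (exists i, f i < g i).
exfalso; apply: fgi.
have ge0 j : 0 <= f j - g j by rewrite subr_ge0 leNgt; apply/negP/fg.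
have sum0 : \sum_j (f j - g j) = 0 by rewrite sumrB sum_fg subrr.
by apply/eqP; rewrite -subr_eq0; apply/eqP/(psumr_eq0P (fun j _ => ge0 j) sum0).
Qed.

Lemma small_weight (R : realFieldType) (K eps : R) : 0 <= K -> 0 < eps ->
  exists2 t, 0 < t < 1 & t * K < eps.
Proof.
move=> K0 eps0; have KE : 0 < 2 * (K + eps) by rewrite mulr_gt0 ?ltr_wpDl.
exists (eps / (2 * (K + eps))).
  by rewrite divr_gt0 //= ltr_pdivrMr // mul1r; lra.
rewrite mulrAC ltr_pdivrMr //; nra.
Qed.

Section SupNorm.
Variables (R : realType) (X A : finType).
Implicit Types f g : X -> A -> R.

Lemma supnorm_ge f x a : `|f x a| <= supnorm f.
Proof. exact: (le_bigmax _ (fun p : X * A => `|f p.1 p.2|) (x, a)). Qed.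

Lemma supnorm_ge0 f : 0 <= supnorm f.
Proof. exact: bigmax_ge_id. Qed.

Lemma supnorm_le f m : 0 <= m -> (forall x a, `|f x a| <= m) -> supnorm f <= m.
Proof. by move=> m0 fm; apply: bigmax_le => // [[x a]] _; exact: fm. Qed.

Lemma supnorm_lt (x0 : X) (a0 : A) f g : (forall x a, 0 <= f x a) ->
  (forall x a, f x a < g x a) -> supnorm f < supnorm g.
Proof.
move=> f0 fg; rewrite /supnorm; have [[x a] _ ->] := @eq_bigmax _ _ _ 0 (x0, a0) xpredT
   (fun p : X * A => `|f p.1 p.2|) erefl (fun _ _ => normr_ge0 _).
rewrite /= ger0_norm //; apply: lt_le_trans (fg x a) _.
exact: le_trans (ler_norm _) (supnorm_ge g x a).
Qed.

Lemma supnorm_cst1 (x0 : X) (a0 : A) : supnorm (fun (_ : X) (_ : A) => 1 : R) = 1.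
Proof.
apply/le_anti/andP; split; first by apply: supnorm_le => // x a; rewrite normr1.
by have := supnorm_ge (fun _ _ => 1) x0 a0; rewrite normr1.
Qed.

End SupNorm.

Definition discounted_series (R : realType) (X A : finType)
  (C : (X -> A -> R) -> X -> A -> R) (g : R) (v : X -> A -> R) : X -> A -> R :=
  fun x a => rseries (fun t => g ^+ t * iter t C v x a).

Section StepLinear.
Variables (R : realType) (X A : finType) (P : X -> A -> X -> R) (nu w : X -> A -> R).
Local Notation C := (step P nu w).

Lemma stepD f g x a : C (fun y b => f y b + g y b) x a = C f x a + C g x a.
Proof.
rewrite /step -big_split; apply: eq_bigr => y _ /=; rewrite -mulrDr -big_split /=.
by congr (_ * _); apply: eq_bigr => b _; rewrite !mulrDr.
Qed.

Lemma stepB f g x a : C (fun y b => f y b - g y b) x a = C f x a - C g x a.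
Proof.
rewrite /step -sumrB; apply: eq_bigr => y _; rewrite -mulrBr -sumrB.
by congr (_ * _); apply: eq_bigr => b _; rewrite !mulrBr.
Qed.

Lemma stepZ k f x a : C (fun y b => k * f y b) x a = k * C f x a.
Proof.
rewrite /step mulr_sumr; apply: eq_bigr => y _; rewrite [RHS]mulrCA [in RHS]mulr_sumr.
by congr (_ * _); apply: eq_bigr => b _; ring.
Qed.

Lemma stepN f x a : C (fun y b => - f y b) x a = - C f x a.
Proof.
by rewrite -mulN1r -stepZ; congr step; apply/funext=> y; apply/funext=> b; rewrite mulN1r.
Qed.

Lemma step_cst k x a : C (fun _ _ => k) x a = k * C (fun _ _ => 1) x a.
Proof. by rewrite -stepZ; congr step; apply/funext=> y; apply/funext=> b; rewrite mulr1. Qed.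

Lemma step0 x a : C (fun _ _ => 0) x a = 0.
Proof. by rewrite /step big1 // => y _; rewrite big1 ?mulr0 // => b _; rewrite !mulr0. Qed.

Lemma step_weightB w' f x a :
  C f x a - step P nu w' f x a = step P nu (fun y b => w y b - w' y b) f x a.
Proof.
rewrite /step -sumrB; apply: eq_bigr => y _; rewrite -mulrBr -sumrB.
by congr (_ * _); apply: eq_bigr => b _; ring.
Qed.

Lemma step_sum (F : nat -> X -> A -> R) n x a :
  C (fun y b => \sum_(0 <= t < n) F t y b) x a = \sum_(0 <= t < n) C (F t) x a.
Proof.
elim: n => [|n IH].
  rewrite big_geq // -[RHS](step0 x a); congr step.
  by apply/funext => y; apply/funext => b; rewrite big_geq.
rewrite big_nat_recr //= -IH -stepD; congr step.
by apply/funext => y; apply/funext => b; rewrite big_nat_recr.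
Qed.

Lemma step_cvg (f : nat -> X -> A -> R) l x a :
  (forall y b, f n y b @[n --> \oo] --> l y b) -> C (f n) x a @[n --> \oo] --> C l x a.
Proof.
move=> fl; rewrite /step.
apply: cvg_big => [|y _]; first exact: add_continuous.
apply: cvgM; first exact: cvg_cst.
apply: cvg_big => [|b _]; first exact: add_continuous.
apply: cvgM; first exact: cvg_cst.
by apply: cvgM; [exact: cvg_cst | exact: fl].
Qed.

Lemma discounted_series0 g : discounted_series C g (fun _ _ => 0) = fun _ _ => 0.
Proof.
have iter0 t : iter t C (fun _ _ => 0) = fun _ _ => 0.
  by elim: t => //= t ->; apply/funext => x; apply/funext => a; rewrite step0.
apply/funext => x; apply/funext => a; rewrite /discounted_series /rseries.
under eq_fun do rewrite iter0 mulr0.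
rewrite (_ : series _ = fun _ => 0); first exact: lim_cst.
by apply/funext => n; rewrite /series /= big1.
Qed.

End StepLinear.

Section StepPositive.
Variables (R : realType) (X A : finType) (P : X -> A -> X -> R) (nu w : X -> A -> R).
Hypotheses (hP0 : forall x a y, 0 <= P x a y) (hnu0 : forall y b, 0 <= nu y b)
  (hw0 : forall y b, 0 <= w y b).
Local Notation C := (step P nu w).

Lemma step_le f g x a : (forall y b, f y b <= g y b) -> C f x a <= C g x a.
Proof.
move=> fg; apply: ler_sum => y _; apply: ler_wpM2l => //.
by apply: ler_sum => b _; apply: ler_wpM2l => //; apply: ler_wpM2l.
Qed.

Lemma step_ge0 f x a : (forall y b, 0 <= f y b) -> 0 <= C f x a.
Proof. by move=> f0; rewrite -(step0 P nu w x a); apply: step_le. Qed.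

Lemma step_norm f x a : `|C f x a| <= C (fun y b => `|f y b|) x a.
Proof.
apply: le_trans (ler_norm_sum _ _ _) _; apply: ler_sum => y _.
rewrite normrM ger0_norm //; apply: ler_wpM2l => //.
apply: le_trans (ler_norm_sum _ _ _) _; apply: ler_sum => b _.
by rewrite !normrM (ger0_norm (hnu0 y b)) (ger0_norm (hw0 y b)).
Qed.

Lemma step_gt0 f x a y b : (forall y b, 0 <= f y b) ->
  0 < P x a y -> 0 < nu y b -> 0 < w y b -> 0 < f y b -> 0 < C f x a.
Proof.
move=> f0 Py nub wb fb; rewrite /step; apply: (psumr_gt0 (i := y)) => [y'|].
  by rewrite mulr_ge0 // sumr_ge0 // => b' _; rewrite !mulr_ge0.
rewrite mulr_gt0 //; apply: (psumr_gt0 (i := b)) => [b'|]; first by rewrite !mulr_ge0.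
by rewrite !mulr_gt0.
Qed.

Lemma step_gt0_ex f x a : (forall y b, 0 <= f y b) -> 0 < C f x a ->
  exists y b, [/\ 0 < P x a y, 0 < nu y b, 0 < w y b & 0 < f y b].
Proof.
move=> f0 /sumr_gt0_ex [y]; rewrite mulr_ge0_gt0 ?sumr_ge0 // => [|b _]; last first.
  by rewrite !mulr_ge0.
case/andP=> Py /sumr_gt0_ex [b]; rewrite !mulr_ge0_gt0 ?mulr_ge0 //.
by case/and3P=> nub wb fb; exists y, b.
Qed.

End StepPositive.

Section StepSubstochastic.
Variables (R : realType) (X A : finType) (P : X -> A -> X -> R) (nu w : X -> A -> R).
Hypotheses (hP : is_kernel P) (hnu : is_policy nu)
  (hw0 : forall y b, 0 <= w y b) (hw1 : forall y b, w y b <= 1).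
Local Notation C := (step P nu w).
Let hP0 : forall x a y, 0 <= P x a y := proj1 hP.
Let hnu0 : forall y b, 0 <= nu y b := proj1 hnu.

Lemma step_cst_le k x a : 0 <= k -> C (fun _ _ => k) x a <= k.
Proof.
move=> k0; rewrite -[leRHS]mul1r -(proj2 hP x a) mulr_suml.
apply: ler_sum => y _; apply: ler_wpM2l => //.
rewrite -[leRHS]mul1r -(proj2 hnu y) mulr_suml.
by apply: ler_sum => b _; apply: ler_wpM2l => //; rewrite ler_piMl.
Qed.

Lemma step_le_cst f m x a : 0 <= m -> (forall y b, f y b <= m) -> C f x a <= m.
Proof. by move=> m0 fm; apply: le_trans (step_cst_le x a m0); exact: step_le. Qed.

Lemma max_principle g c E : 0 <= g -> g < 1 -> 0 <= c ->
  (forall x a, E x a <= g * C E x a + c) -> forall x a, E x a <= c / (1 - g).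
Proof.
move=> g0 g1 c0 hE.
pose m := \big[Num.max/0]_(p : X * A) E p.1 p.2.
have Em x a : E x a <= m by exact: (le_bigmax _ _ (x, a)).
have m0 : 0 <= m by exact: bigmax_ge_id.
have : m <= g * m + c.
  apply: bigmax_le => [|[x a] _ /=]; first by rewrite addr_ge0 ?mulr_ge0.
  apply: le_trans (hE x a) _; rewrite lerD2r; apply: ler_wpM2l => //.
  exact: step_le_cst.
move=> hm x a; apply: le_trans (Em x a) _; rewrite ler_pdivlMr ?subr_gt0 //; lra.
Qed.

Lemma max_principle0 g E : 0 <= g -> g < 1 ->
  (forall x a, E x a <= g * C E x a) -> forall x a, E x a <= 0.
Proof.
move=> g0 g1 hE x a; rewrite -(mul0r (1 - g)^-1).
by apply: max_principle => // y b; rewrite addr0.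
Qed.

Lemma iter_norm_le v B : 0 <= B -> (forall y b, `|v y b| <= B) ->
  forall t x a, `|iter t C v x a| <= B.
Proof.
move=> B0 hv; elim => [|t IH] x a //=.
by apply: le_trans (step_norm hP0 hnu0 hw0 _ _ _) _; exact: step_le_cst.
Qed.

Lemma discounted_series_cvg g v x a : 0 <= g -> g < 1 ->
  cvgn (series (fun t => g ^+ t * iter t C v x a)).
Proof.
move=> g0 g1; have B0 := supnorm_ge0 v.
apply: normed_cvg; apply: (@series_le_cvg _ _ (geometric (supnorm v) g)) => [n|n|n|].
- exact: normr_ge0.
- exact: geometric_ge0.
- rewrite /geometric /= normrM ger0_norm ?exprn_ge0 // mulrC.
  by apply: ler_wpM2r; [exact: exprn_ge0 | exact: (iter_norm_le B0 (supnorm_ge v) n x a)].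
- by apply: is_cvg_geometric_series; rewrite ger0_norm.
Qed.

Lemma discounted_seriesE g v x a : 0 <= g -> g < 1 ->
  discounted_series C g v x a = v x a + g * C (discounted_series C g v) x a.
Proof.
move=> g0 g1; pose s n y b := series (fun t => g ^+ t * iter t C v y b) n.
have sE n : s n.+1 x a = v x a + g * C (s n) x a.
  rewrite /s /series /= big_nat_recl //= expr0 mul1r step_sum mulr_sumr.
  by congr (_ + _); apply: eq_bigr => t _; rewrite stepZ exprS mulrA.
have s_cvg y b : s n y b @[n --> \oo] --> discounted_series C g v y b.
  by have /cvgP := discounted_series_cvg (v := v) (x := y) (a := b) g0 g1.
have lim1 : s n.+1 x a @[n --> \oo] --> discounted_series C g v x a.
  by rewrite (cvg_shiftS (fun n => s n x a)); exact: s_cvg.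
have lim2 : s n.+1 x a @[n --> \oo] --> v x a + g * C (discounted_series C g v) x a.
  under eq_fun do rewrite sE.
  by apply: cvgD; [exact: cvg_cst | apply: cvgM; [exact: cvg_cst | exact: step_cvg]].
exact: cvg_unique lim1 lim2.
Qed.

End StepSubstochastic.

Section Greedy.
Variables (R : realType) (X A : finType).

Lemma greedy_eq1 (Q : X -> A -> R) x a :
  greedy Q x = [set a] <-> forall b, b != a -> Q x b < Q x a.
Proof.
split=> [ga b ba | gt].
  have ga_a : greedy Q x a by rewrite ga.
  rewrite ltNge; apply/negP => le_ab.
  have : greedy Q x b by move=> b'; exact: le_trans (ga_a b') le_ab.
  by rewrite ga => /= eba; move: ba; rewrite eba eqxx.
apply/seteqP; split=> b /=.
  by move=> gb; apply/eqP; apply: contraT => /gt; rewrite ltNge gb.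
by move=> -> b'; case: (eqVneq b' a) => [-> // | /gt/ltW].
Qed.

Lemma greedy_stable (Q1 : X -> A -> R) :
  (forall x, exists a, greedy Q1 x = [set a]) ->
  exists2 eps, 0 < eps & forall Q, (forall x a, `|Q x a - Q1 x a| < eps) ->
    forall x, greedy Q x = greedy Q1 x.
Proof.
move=> /choice [ast hast].
have gt_ast x := (greedy_eq1 Q1 x (ast x)).1 (hast x).
pose gap := \big[Num.min/1]_(p : X * A | p.2 != ast p.1)
              (Q1 p.1 (ast p.1) - Q1 p.1 p.2).
have gap0 : 0 < gap.
  by apply: lt_bigmin => [|[x b] /= ba]; rewrite ?subr_gt0 ?gt_ast.
have gap_le x b : b != ast x -> gap <= Q1 x (ast x) - Q1 x b.
  exact: (bigmin_le_cond _ (j := (x, b)) (P := fun p : X * A => p.2 != ast p.1)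
    (fun p : X * A => Q1 p.1 (ast p.1) - Q1 p.1 p.2)).
exists (gap / 2); first by rewrite divr_gt0.
move=> Q hQ x; rewrite hast; apply/greedy_eq1 => b ba.
have := hQ x b; have := hQ x (ast x); have := gap_le x b ba; rewrite !ltr_norml.
by move=> h1 /andP[h2 h3] /andP[h4 h5]; lra.
Qed.

End Greedy.

Section Bellman.
Variables (R : realType) (X A : finType) (P : X -> A -> X -> R) (r : X -> A -> R)
  (gamma : R).
Hypotheses (hP : is_kernel P) (g0 : 0 <= gamma) (g1 : gamma < 1).
Local Notation M nu := (step P nu (fun _ _ => 1)).

Lemma step1_cst nu k x a : is_policy nu -> M nu (fun _ _ => k) x a = k.
Proof.
move=> hnu; have sum_nu y : \sum_b nu y b * (1 * k) = k.
  by rewrite mul1r -mulr_suml (proj2 hnu y) mul1r.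
rewrite /step (eq_bigr (fun y => P x a y * k)) => [|y _]; last by rewrite sum_nu.
by rewrite -mulr_suml (proj2 hP x a) mul1r.
Qed.

Lemma step1_norm_le nu f B x a : is_policy nu -> 0 <= B ->
  (forall y b, `|f y b| <= B) -> `|M nu f x a| <= B.
Proof.
move=> hnu B0 fB.
apply: le_trans (step_norm (proj1 hP) (proj1 hnu) (fun _ _ => ler01) _ _ _) _.
exact: (step_le_cst hP hnu).
Qed.

Lemma Qfun_bellman nu x a : is_policy nu ->
  Qfun P r gamma nu x a = r x a + gamma * M nu (Qfun P r gamma nu) x a.
Proof. by move=> hnu; apply: discounted_seriesE. Qed.

Lemma bellman_perturb p q (Qp Qq : X -> A -> R) e : is_policy p -> 0 <= e ->
  (forall x a, Qp x a = r x a + gamma * M p Qp x a) ->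
  (forall x a, Qq x a = r x a + gamma * M q Qq x a) ->
  (forall x a, `|M p Qq x a - M q Qq x a| <= e) ->
  forall x a, `|Qp x a - Qq x a| <= gamma * e / (1 - gamma).
Proof.
move=> hp e0 hQp hQq he.
have w0 (y : X) (b : A) : (0 : R) <= 1 := ler01.
apply: (max_principle hP hp w0 (fun _ _ => lexx 1)) => //; first exact: mulr_ge0.
move=> x a; rewrite {1}hQp {1}hQq.
have -> : r x a + gamma * M p Qp x a - (r x a + gamma * M q Qq x a) =
          gamma * M p (fun y b => Qp y b - Qq y b) x a
          + gamma * (M p Qq x a - M q Qq x a) by rewrite stepB; ring.
apply: le_trans (ler_normD _ _) _; rewrite !normrM ger0_norm //.
by apply: lerD; apply: ler_wpM2l => //; exact: step_norm (proj1 hP) (proj1 hp) w0 _ _ _.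
Qed.

End Bellman.

Section TraceCoefficient.
Variables (R : realType) (X A : finType) (p mu : X -> A -> R).

Lemma trace_c_ge0 y b : (forall y b, 0 <= p y b) -> (forall y b, 0 <= mu y b) ->
  0 <= trace_c p mu y b.
Proof. by move=> p0 mu0; rewrite /trace_c le_min ler01 divr_ge0. Qed.

Lemma trace_c_le1 y b : trace_c p mu y b <= 1.
Proof. by rewrite /trace_c ge_min lexx. Qed.

End TraceCoefficient.

Section Mixture.
Variables (R : realType) (X A : finType) (pi mu : X -> A -> R).
Hypotheses (hpi : is_policy pi) (hmu : is_policy mu).

Lemma mixpol_policy al : 0 <= al <= 1 -> is_policy (mixpol al pi mu).
Proof.
case/andP=> al0 al1; split=> [x b|x].
  by rewrite /mixpol addr_ge0 // mulr_ge0 ?(proj1 hpi) ?(proj1 hmu) ?subr_ge0.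
by rewrite /mixpol big_split /= -!mulr_sumr (proj2 hpi) (proj2 hmu); ring.
Qed.

Lemma step_mixpol (P : X -> A -> X -> R) w al f x a :
  step P (mixpol al pi mu) w f x a = al * step P pi w f x a + (1 - al) * step P mu w f x a.
Proof.
rewrite /step /mixpol !mulr_sumr -big_split /=; apply: eq_bigr => y _.
rewrite mulrCA [(1 - al) * _]mulrCA -mulrDr; congr (_ * _).
by rewrite !mulr_sumr -big_split /=; apply: eq_bigr => b _; ring.
Qed.

Lemma step_mixpol_dev (P : X -> A -> X -> R) al Q x a : is_kernel P -> al <= 1 ->
  `|step P (mixpol al pi mu) (fun _ _ => 1) Q x a - step P pi (fun _ _ => 1) Q x a|
    <= (1 - al) * (2 * supnorm Q).
Proof.
move=> hP al1; rewrite step_mixpol.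
set Mmu := step P mu _ Q x a; set Mpi := step P pi _ Q x a.
rewrite (_ : _ - _ = (1 - al) * (Mmu - Mpi)); last by ring.
rewrite normrM ger0_norm ?subr_ge0 //; apply: ler_wpM2l; first by rewrite subr_ge0.
have QB := supnorm_ge Q; have B0 := supnorm_ge0 Q.
apply: le_trans (ler_normB _ _) _.
by rewrite mulr2n mulrDl mul1r lerD // step1_norm_le.
Qed.

Lemma mixpol_ratio al y b : mu y b != 0 ->
  mixpol al pi mu y b / mu y b = al * (pi y b / mu y b) + (1 - al).
Proof. by move=> mu0; rewrite /mixpol; field. Qed.

Lemma trace_c_mixpol_ge al y b : 0 <= al <= 1 ->
  trace_c (mixpol 1 pi mu) mu y b <= trace_c (mixpol al pi mu) mu y b.
Proof.
case/andP=> al0 al1; rewrite /trace_c.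
have [->|mu0] := eqVneq (mu y b) 0; first by rewrite !invr0 !mulr0.
rewrite !mixpol_ratio // subrr mul1r addr0.
have s0 : 0 <= pi y b / mu y b by rewrite divr_ge0 ?(proj1 hpi) ?(proj1 hmu).
set s := pi y b / mu y b in s0 *; set m := Num.min 1 s.
have m1 : m <= 1 by rewrite /m ge_min lexx.
have ms : m <= s by rewrite /m ge_min lexx orbT.
rewrite le_min m1 /=.
have : 0 <= al * (s - m) by rewrite mulr_ge0 // subr_ge0.
have : 0 <= (1 - al) * (1 - m) by rewrite mulr_ge0 // subr_ge0.
lra.
Qed.

Lemma trace_c_mixpol_gt al y b : 0 <= al < 1 -> pi y b < mu y b ->
  trace_c (mixpol 1 pi mu) mu y b < trace_c (mixpol al pi mu) mu y b.
Proof.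
case/andP=> al0 al1 pi_mu.
have mu0 : 0 < mu y b by apply: le_lt_trans pi_mu; exact: (proj1 hpi).
rewrite /trace_c !mixpol_ratio ?gt_eqF // subrr mul1r addr0.
have s1 : pi y b / mu y b < 1 by rewrite ltr_pdivrMr // mul1r.
rewrite (min_r (ltW s1)) lt_min s1 /=.
have : 0 < (1 - al) * (1 - pi y b / mu y b) by rewrite mulr_gt0 // subr_gt0.
lra.
Qed.

Lemma trace_c_mixpol_gt0 al y b : 0 <= al < 1 -> 0 < mu y b ->
  0 < trace_c (mixpol al pi mu) mu y b.
Proof.
case/andP=> al0 al1 mu0.
rewrite /trace_c mixpol_ratio ?gt_eqF // lt_min ltr01 /=.
have : 0 <= al * (pi y b / mu y b).
  by rewrite mulr_ge0 // divr_ge0 ?(proj1 hpi) ?(proj1 hmu).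
lra.
Qed.

End Mixture.

Section Retrace.
Variables (R : realType) (X A : finType) (P : X -> A -> X -> R) (r : X -> A -> R)
  (gamma : R) (p mu : X -> A -> R).
Hypotheses (hP : is_kernel P) (g0 : 0 <= gamma) (g1 : gamma < 1)
  (hp : is_policy p) (hmu : is_policy mu).

Local Notation c := (trace_c p mu).
Local Notation M := (step P p (fun _ _ => 1)).
Local Notation C := (step P mu c).
Local Notation cut := (step P (fun y b => p y b - mu y b * c y b) (fun _ _ => 1)).
Local Notation T := (retrace P r gamma p mu).

Let hP0 : forall x a y, 0 <= P x a y := proj1 hP.
Let c0 y b : 0 <= c y b := trace_c_ge0 y b (proj1 hp) (proj1 hmu).
Let c1 y b : c y b <= 1 := trace_c_le1 p mu y b.
Let w0 (y : X) (b : A) : (0 : R) <= 1 := ler01.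

Lemma cut_coef_ge0 y b : 0 <= p y b - mu y b * c y b.
Proof.
rewrite subr_ge0; have [->|mu0] := eqVneq (mu y b) 0; first by rewrite mul0r (proj1 hp).
have hc : c y b <= p y b / mu y b by rewrite /trace_c ge_min lexx orbT.
by apply: le_trans (ler_wpM2l (proj1 hmu y b) hc) _; rewrite mulrC divfK.
Qed.

Lemma step_split f x a : M f x a = C f x a + cut f x a.
Proof.
rewrite /step -big_split; apply: eq_bigr => y _ /=; rewrite -mulrDr -big_split /=.
by congr (_ * _); apply: eq_bigr => b _; ring.
Qed.

Lemma tdE Q x a : td P r gamma p Q x a = r x a + gamma * M Q x a - Q x a.
Proof.
rewrite /td /step; congr (_ + _ * _ - _); apply: eq_bigr => y _; congr (_ * _).
by apply: eq_bigr => b _; rewrite mul1r.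
Qed.

Lemma retraceE Q x a : T Q x a = r x a + gamma * cut Q x a + gamma * C (T Q) x a.
Proof.
set U := discounted_series C gamma (td P r gamma p Q).
have TE : T Q = fun y b => Q y b + U y b by [].
have UE : U x a = td P r gamma p Q x a + gamma * C U x a by exact: discounted_seriesE.
by rewrite [in LHS]TE [in RHS]TE /= stepD UE tdE step_split; ring.
Qed.

Lemma retrace_fixE Q : T Q = Q -> forall x a, Q x a = r x a + gamma * M Q x a.
Proof. by move=> TQ x a; rewrite -{1}TQ retraceE TQ step_split; ring. Qed.

Lemma retrace_Qfun : T (Qfun P r gamma p) = Qfun P r gamma p.
Proof.
set Qp := Qfun P r gamma p.
have td0 : td P r gamma p Qp = fun _ _ => 0.
  by apply/funext => x; apply/funext => a; rewrite tdE -Qfun_bellman ?subrr.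
apply/funext => x; apply/funext => a.
have -> : T Qp x a = Qp x a + discounted_series C gamma (td P r gamma p Qp) x a by [].
by rewrite td0 discounted_series0 addr0.
Qed.

Lemma retrace_diffE Q Q' x a : T Q x a - T Q' x a =
  gamma * cut (fun y b => Q y b - Q' y b) x a
  + gamma * C (fun y b => T Q y b - T Q' y b) x a.
Proof. by rewrite (retraceE Q) (retraceE Q') !stepB; ring. Qed.

Lemma cut_norm_le f N x a : (forall y b, `|f y b| <= N) ->
  `|cut f x a| <= N * (1 - C (fun _ _ => 1) x a).
Proof.
move=> fN; apply: le_trans (step_norm hP0 cut_coef_ge0 w0 _ _ _) _.
apply: le_trans (step_le hP0 cut_coef_ge0 w0 (g := fun _ _ => N) _ _ fN) _.
have := step_split (fun _ _ => N) x a.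
by rewrite step1_cst // {1}step_cst; lra.
Qed.

Definition local_rate x a := T (fun _ _ => 1) x a - T (fun _ _ => 0) x a.

Lemma local_rateE x a :
  local_rate x a = gamma * (1 - C (fun _ _ => 1) x a) + gamma * C local_rate x a.
Proof.
rewrite /local_rate retrace_diffE; congr (gamma * _ + _).
rewrite (_ : (fun _ _ => 1 - 0) = fun _ _ => 1); last first.
  by apply/funext => y; apply/funext => b; rewrite subr0.
by have := step_split (fun _ _ => 1) x a; rewrite step1_cst //; lra.
Qed.

Lemma local_rate_ge0 x a : 0 <= local_rate x a.
Proof.
rewrite -oppr_le0; move: x a.
apply: (max_principle0 hP hmu c0 c1 g0 g1) => x a; rewrite stepN local_rateE.
have : 0 <= gamma * (1 - C (fun _ _ => 1) x a).
  by rewrite mulr_ge0 // subr_ge0 (step_cst_le hP hmu c1).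
lra.
Qed.

Lemma local_rate_le_gamma x a : local_rate x a <= gamma.
Proof.
rewrite -subr_le0; move: x a.
apply: (max_principle0 hP hmu c0 c1 g0 g1) => x a.
rewrite stepB step_cst local_rateE.
have C1_ge0 := step_ge0 hP0 (proj1 hmu) c0 x a (fun _ _ => ler01).
have g1' : 0 <= 1 - gamma by rewrite subr_ge0 ltW.
have := mulr_ge0 (mulr_ge0 g0 C1_ge0) g1'; lra.
Qed.

Lemma retrace_diff_norm_le Q Q' N : (forall y b, `|Q y b - Q' y b| <= N) ->
  forall x a, `|T Q x a - T Q' x a| <= N * local_rate x a.
Proof.
move=> QN; suff : forall x a, `|T Q x a - T Q' x a| - N * local_rate x a <= 0.
  by move=> + x a => /(_ x a); rewrite subr_le0.
apply: (max_principle0 hP hmu c0 c1 g0 g1) => x a.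
rewrite stepB stepZ local_rateE retrace_diffE.
have := ler_normD (gamma * cut (fun y b => Q y b - Q' y b) x a)
  (gamma * C (fun y b => T Q y b - T Q' y b) x a).
rewrite !normrM ger0_norm //.
have := ler_wpM2l g0 (cut_norm_le x a QN).
have := ler_wpM2l g0 (step_norm hP0 (proj1 hmu) c0 (fun y b => T Q y b - T Q' y b) x a).
lra.
Qed.

Lemma contraction_rate_retrace (x0 : X) (a0 : A) :
  contraction_rate T = supnorm local_rate.
Proof.
rewrite /contraction_rate; set S := [set k | _].
have S_rate : S (supnorm local_rate).
  exists (fun _ _ => 1), (fun _ _ => 0); split.
    by move/(congr1 (fun F => F x0 a0))/eqP; rewrite oner_eq0.
  rewrite (_ : (fun _ _ => 1 - 0) = fun _ _ => 1); last first.
    by apply/funext => y; apply/funext => b; rewrite subr0.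
  by rewrite supnorm_cst1 // divr1.
have ub : ubound S (supnorm local_rate).
  move=> _ [Q [Q' [QQ' ->]]]; set N := supnorm (fun x a => Q x a - Q' x a).
  have N0 : 0 < N.
    have [x [a /eqP Qxa]] : exists x a, Q x a <> Q' x a.
      apply: contra_notP QQ' => /forallNP QQ'; apply/funext => x; apply/funext => a.
      by have /forallNP /(_ a) /contrapT := QQ' x.
    by apply: lt_le_trans (supnorm_ge _ x a); rewrite normr_gt0 subr_eq0.
  rewrite ler_pdivrMr //; apply: supnorm_le => [|x a].
    by rewrite mulr_ge0 ?supnorm_ge0 ?ltW.
  apply: le_trans (retrace_diff_norm_le (supnorm_ge _) x a) _.
  rewrite mulrC ler_wpM2r ?supnorm_ge0 //.
  exact: le_trans (ler_norm _) (supnorm_ge _ x a).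
apply/le_anti/andP; split; first by apply: ge_sup => //; exists (supnorm local_rate).
by apply: sup_upper_bound => //; split; exists (supnorm local_rate).
Qed.

End Retrace.

Section Visits.
Variables (R : realType) (X A : finType) (P : X -> A -> X -> R) (mu : X -> A -> R).
Hypotheses (hP0 : forall x a y, 0 <= P x a y) (hmu0 : forall y b, 0 <= mu y b).
Let w0 (y : X) (b : A) : (0 : R) <= 1 := ler01.

Lemma visit_probS t x a x' : visit_prob P mu t.+1 x a x' =
  step P mu (fun _ _ => 1) (fun y b => visit_prob P mu t y b x') x a.
Proof.
by apply: eq_bigr => y _; congr (_ * _); apply: eq_bigr => b _; rewrite mul1r.
Qed.

Lemma visit_prob_ge0 t x a x' : 0 <= visit_prob P mu t x a x'.
Proof.
elim: t x a => [|t IH] x a; first by rewrite /=; case: eqP.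
by rewrite visit_probS; exact: (step_ge0 hP0 hmu0 w0).
Qed.

Lemma visit_probS_gt0 t x a y b x' : 0 < P x a y -> 0 < mu y b ->
  0 < visit_prob P mu t y b x' -> 0 < visit_prob P mu t.+1 x a x'.
Proof.
move=> Py mub v; rewrite visit_probS.
by apply: (step_gt0 hP0 hmu0 w0 (fun y b => visit_prob_ge0 t y b x') Py mub).
Qed.

Lemma visit_probS_gt0_ex t x a x' : 0 < visit_prob P mu t.+1 x a x' ->
  exists y b, [/\ 0 < P x a y, 0 < mu y b & 0 < visit_prob P mu t y b x'].
Proof.
rewrite visit_probS => /(step_gt0_ex hP0 hmu0 w0 (fun y b => visit_prob_ge0 t y b x')).
by case=> y [b [Py mub _ v]]; exists y, b.
Qed.

End Visits.

Section Comparison.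
Variables (R : realType) (X A : finType) (P : X -> A -> X -> R) (r : X -> A -> R)
  (gamma : R) (p q mu : X -> A -> R).
Hypotheses (hP : is_kernel P) (g0 : 0 < gamma) (g1 : gamma < 1)
  (hp : is_policy p) (hq : is_policy q) (hmu : is_policy mu)
  (cqp : forall y b, trace_c q mu y b <= trace_c p mu y b).

Local Notation Cp := (step P mu (trace_c p mu)).
Local Notation rho_p := (local_rate P r gamma p mu).
Local Notation rho_q := (local_rate P r gamma q mu).
Local Notation dc := (fun y b => trace_c p mu y b - trace_c q mu y b).

Let hP0 : forall x a y, 0 <= P x a y := proj1 hP.
Let g0' : 0 <= gamma := ltW g0.
Let cp0 y b : 0 <= trace_c p mu y b := trace_c_ge0 y b (proj1 hp) (proj1 hmu).
Let dc0 y b : 0 <= dc y b.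
Proof. by rewrite subr_ge0. Qed.

Lemma local_rate_diffE x a : rho_q x a - rho_p x a =
  gamma * Cp (fun y b => rho_q y b - rho_p y b) x a
  + gamma * step P mu dc (fun y b => 1 - rho_q y b) x a.
Proof.
rewrite (local_rateE r hP g0' g1 hq hmu) (local_rateE r hP g0' g1 hp hmu).
by rewrite !stepB -!step_weightB; ring.
Qed.

Let rho_q_lt1 y b : 0 < 1 - rho_q y b.
Proof. by rewrite subr_gt0; apply: le_lt_trans g1; exact: local_rate_le_gamma. Qed.

Let diff_term_ge0 x a : 0 <= step P mu dc (fun y b => 1 - rho_q y b) x a.
Proof. by apply: (step_ge0 hP0 (proj1 hmu) dc0) => y b; exact: ltW. Qed.

Lemma local_rate_le_of_trace x a : rho_p x a <= rho_q x a.
Proof.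
rewrite -subr_ge0 -oppr_le0; move: x a.
apply: (max_principle0 hP hmu cp0 (trace_c_le1 p mu) g0' g1) => x a.
rewrite stepN local_rate_diffE.
have := mulr_ge0 g0' (diff_term_ge0 x a); lra.
Qed.

Let D_ge0 y b : 0 <= rho_q y b - rho_p y b.
Proof. by rewrite subr_ge0; exact: local_rate_le_of_trace. Qed.

Definition trace_separated y :=
  exists b, 0 < mu y b /\ trace_c q mu y b < trace_c p mu y b.

Hypothesis cp_gt0 : forall y b, 0 < mu y b -> 0 < trace_c p mu y b.

Lemma local_rate_lt_of_separated x a y : 0 < P x a y -> trace_separated y ->
  rho_p x a < rho_q x a.
Proof.
move=> Py [b [mub c_lt]]; rewrite -subr_gt0 local_rate_diffE.
have := mulr_ge0 g0' (step_ge0 hP0 (proj1 hmu) cp0 x a D_ge0).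
have : 0 < step P mu dc (fun y b => 1 - rho_q y b) x a.
  apply: (step_gt0 hP0 (proj1 hmu) dc0 _ Py mub) => [y' b'||]; last exact: rho_q_lt1.
    exact: ltW.
  by rewrite subr_gt0.
move=> /(mulr_gt0 g0); lra.
Qed.

Lemma local_rate_lt_of_step x a y b : 0 < P x a y -> 0 < mu y b ->
  rho_p y b < rho_q y b -> rho_p x a < rho_q x a.
Proof.
move=> Py mub; rewrite -subr_gt0 => Dyb; rewrite -subr_gt0 local_rate_diffE.
have := mulr_ge0 g0' (diff_term_ge0 x a).
have := mulr_gt0 g0 (step_gt0 hP0 (proj1 hmu) cp0 D_ge0 Py mub (cp_gt0 mub) Dyb).
lra.
Qed.

Lemma local_rate_lt_of_visit t x a x' : 0 < visit_prob P mu t.+1 x a x' ->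
  trace_separated x' -> rho_p x a < rho_q x a.
Proof.
elim: t x a => [|t IH] x a /(visit_probS_gt0_ex hP0 (proj1 hmu)) [y [b [Py mub v]]] sep.
  move: v => /=; case: eqP => [yx' _ | _]; last by rewrite ltxx.
  by apply: local_rate_lt_of_separated Py _; rewrite yx'.
exact: local_rate_lt_of_step Py mub (IH y b v sep).
Qed.

Lemma local_rate_lt_of_trace :
  (forall x a, exists t x', 0 < visit_prob P mu t x a x' /\ trace_separated x') ->
  forall x a, rho_p x a < rho_q x a.
Proof.
move=> reach x a.
(* Retrace ignores the trace at time 0, so separation is sought from a successor. *)
have [y Py] : exists y, 0 < P x a y by apply: sumr_gt0_ex; rewrite (proj2 hP).
have [b mub] : exists b, 0 < mu y b by apply: sumr_gt0_ex; rewrite (proj2 hmu).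
have [t [x' [v sep]]] := reach y b.
exact: local_rate_lt_of_visit (visit_probS_gt0 hP0 (proj1 hmu) Py mub v) sep.
Qed.

End Comparison.

Section AlphaRetrace.
Variables (R : realType) (X A : finType) (P : X -> A -> X -> R) (r : X -> A -> R)
  (gamma : R) (pi mu : X -> A -> R).
Hypotheses (hP : is_kernel P) (g0 : 0 < gamma) (g1 : gamma < 1)
  (hpi : is_policy pi) (hmu : is_policy mu).
Let g0' : 0 <= gamma := ltW g0.
Local Notation Q1 := (Qfun P r gamma pi).

Lemma alpha_retrace_fix_near eps : 0 < eps ->
  exists2 al, 0 < al < 1 & forall Qt, alpha_retrace P r gamma al pi mu Qt = Qt ->
    forall x a, `|Qt x a - Q1 x a| < eps.
Proof.
move=> eps0; set B := supnorm Q1.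
have K0 : 0 <= gamma * (2 * B) / (1 - gamma).
  by rewrite divr_ge0 ?mulr_ge0 ?supnorm_ge0 // subr_ge0 ltW.
have [t /andP[t0 t1] tK] := small_weight K0 eps0.
exists (1 - t); first by apply/andP; split; lra.
move=> Qt fixQt x a.
have hp : is_policy (mixpol (1 - t) pi mu).
  by apply: mixpol_policy => //; apply/andP; split; lra.
apply: le_lt_trans tK.
have -> : t * (gamma * (2 * B) / (1 - gamma)) =
  gamma * ((1 - (1 - t)) * (2 * B)) / (1 - gamma) by ring.
apply: (bellman_perturb hP g0' g1 hp _ (retrace_fixE hP g0' g1 hp hmu fixQt)
  (fun x a => Qfun_bellman r hP g0' g1 x a hpi)).
  by rewrite mulr_ge0 ?mulr_ge0 ?supnorm_ge0 // subr_ge0; lra.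
by move=> y b; apply: step_mixpol_dev => //; lra.
Qed.

Lemma alpha_retrace_rate_le (x0 : X) (a0 : A) al : 0 <= al <= 1 ->
  contraction_rate (alpha_retrace P r gamma al pi mu)
    <= contraction_rate (alpha_retrace P r gamma 1 pi mu).
Proof.
move=> al01; have hp := mixpol_policy hpi hmu al01.
have hq : is_policy (mixpol 1 pi mu) by apply: (mixpol_policy hpi hmu); rewrite ler01 lexx.
rewrite /alpha_retrace (contraction_rate_retrace r hP g0' g1 hp hmu x0 a0).
rewrite (contraction_rate_retrace r hP g0' g1 hq hmu x0 a0).
apply: supnorm_le => [|x a]; first exact: supnorm_ge0.
rewrite ger0_norm ?(local_rate_ge0 r hP g0' g1 hp hmu) //.
apply: le_trans (local_rate_le_of_trace r hP g0 g1 hp hq hmu _ x a) _.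
  by move=> y b; exact: trace_c_mixpol_ge.
exact: le_trans (ler_norm _) (supnorm_ge _ x a).
Qed.

Lemma alpha_retrace_rate_lt (x0 : X) (a0 : A) al : 0 <= al < 1 ->
  (forall x a, distinguishable P pi mu x a) ->
  contraction_rate (alpha_retrace P r gamma al pi mu)
    < contraction_rate (alpha_retrace P r gamma 1 pi mu).
Proof.
move=> al01 dist; have /andP[al0 al1] := al01.
have hp : is_policy (mixpol al pi mu) by apply: (mixpol_policy hpi hmu); rewrite al0 ltW.
have hq : is_policy (mixpol 1 pi mu) by apply: (mixpol_policy hpi hmu); rewrite ler01 lexx.
rewrite /alpha_retrace (contraction_rate_retrace r hP g0' g1 hp hmu x0 a0).
rewrite (contraction_rate_retrace r hP g0' g1 hq hmu x0 a0).
apply: (supnorm_lt x0 a0) => [x a|]; first exact: local_rate_ge0.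
apply: (local_rate_lt_of_trace r hP g0 g1 hp hq hmu) => [y b|y b mub|x a].
- by apply: (trace_c_mixpol_ge hpi hmu); rewrite al0 ltW.
- exact: trace_c_mixpol_gt0.
have [t [y [v neq]]] := dist x a; exists t, y; split => //.
have [b lt_b] : exists b, pi y b < mu y b.
  by apply: sum_eq_exists_lt neq; rewrite (proj2 hpi) (proj2 hmu).
exists b; split; first exact: le_lt_trans (proj1 hpi y b) lt_b.
exact: trace_c_mixpol_gt.
Qed.

End AlphaRetrace.

Unset Implicit Arguments.
Set Strict Implicit.

Theorem proposition3p3 (R : realType) (X A : finType) (x0 : X)
  (P : X -> A -> X -> R) (r : X -> A -> R) (gamma : R)
  (pi mu : X -> A -> R) :
  is_kernel P -> 0 < gamma -> gamma < 1 ->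
  is_policy pi -> is_policy mu ->
  (forall x, exists astar : A, greedy (Qfun P r gamma pi) x = [set astar]) ->
  exists alpha : R, 0 < alpha < 1 /\
    (exists Qt, alpha_retrace P r gamma alpha pi mu Qt = Qt) /\
    (forall Qt, alpha_retrace P r gamma alpha pi mu Qt = Qt ->
       forall x, greedy Qt x = greedy (Qfun P r gamma pi) x) /\
    contraction_rate (alpha_retrace P r gamma alpha pi mu)
      <= contraction_rate (alpha_retrace P r gamma 1 pi mu) /\
    ((forall x a, distinguishable P pi mu x a) ->
     contraction_rate (alpha_retrace P r gamma alpha pi mu)
       < contraction_rate (alpha_retrace P r gamma 1 pi mu)).
Proof.
move=> hP g0 g1 hpi hmu hgreedy.
have [a0 _] := hgreedy x0.
have [eps eps0 greedy_near] := greedy_stable hgreedy.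
have [al al01 fix_near] := alpha_retrace_fix_near r hP g0 g1 hpi hmu eps0.
have /andP[al0 al1] := al01.
have al01' : 0 <= al <= 1 by rewrite !ltW.
exists al; split => //; split.
  exists (Qfun P r gamma (mixpol al pi mu)).
  by apply: retrace_Qfun => //; [exact: ltW | exact: mixpol_policy].
split; first by move=> Qt fixQt; apply: greedy_near; exact: fix_near.
split; first exact: alpha_retrace_rate_le.
by apply: alpha_retrace_rate_lt; rewrite ?ltW.
Qed.
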